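(* Let $G$ be a group, $S\subset G$ a symmetric determining set, and $H\triangleleft G$ a normal subgroup of finite index. If $S$ intersects each coset of $H$ in $G$, then $(S^3\cap H)^2$ is a determining set of $H$.
   Context: $S^k:=\{s_1\cdots s_k: s_j\in S\}$. A generating subset $S$ of a group $G$ containing the identity is a determining set if $G$ has a presentation $\langle S\mid\mathcal{R}\rangle$ in which every relator is a word of length $3$ in the letters $S\cup S^{-1}$. *)

From Stdlib Require Import List Relations.
Import ListNotations.
Set Implicit Arguments.
Unset Strict Implicit.

Record Group := {
  carrier :> Type;
  gmul : carrier -> carrier -> carrier;
  gone : carrier;
  ginv : carrier -> carrier;
  gmulA : forall x y z, gmul x (gmul y z) = gmul (gmul x y) z;
  gmul1 : forall x, gmul gone x = x;
  gmulV : forall x, gmul (ginv x) x = gone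
}.

Section Defs.
Variable G : Group.

Definition is_subgroup (H : G -> Prop) : Prop :=
  H (@gone G) /\ (forall x y, H x -> H y -> H (@gmul G x y)) /\
  (forall x, H x -> H (@ginv G x)).

Definition is_normal (H : G -> Prop) : Prop :=
  forall g h, H h -> H (@gmul G (@gmul G g h) (@ginv G g)).

Definition finite_index (H : G -> Prop) : Prop :=
  exists l : list G, forall g, exists t, In t l /\ H (@gmul G (@ginv G t) g).

Definition symmetric_set (S : G -> Prop) : Prop :=
  forall s, S s -> S (@ginv G s).

Definition meets_every_coset (S H : G -> Prop) : Prop :=
  forall g, exists s, S s /\ H (@gmul G (@ginv G g) s).

Definition set_pow2 (S : G -> Prop) : G -> Prop :=
  fun x => exists a b, S a /\ S b /\ x = @gmul G a b.
Definition set_pow3 (S : G -> Prop) : G -> Prop :=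
  fun x => exists a b c, S a /\ S b /\ S c /\ x = @gmul G (@gmul G a b) c.
Definition setI (A B : G -> Prop) : G -> Prop := fun x => A x /\ B x.

(** Words in the letters S ∪ S^{-1}: a letter (x, b) stands for the
    generator symbol x (b = false) or its formal inverse (b = true). *)
Definition letter := (G * bool)%type.
Definition eval_letter (l : letter) : G :=
  if snd l then @ginv G (fst l) else fst l.
Definition eval (w : list letter) : G :=
  fold_right (fun l acc => @gmul G (eval_letter l) acc) (@gone G) w.
Definition word_over (S : G -> Prop) (w : list letter) : Prop :=
  forall l, In l w -> S (fst l).

Inductive elem_move (S : G -> Prop) (R : list letter -> Prop)
  : list letter -> list letter -> Prop :=
| mv_free : forall u v x b, S x ->
    elem_move S R (u ++ [(x, b); (x, negb b)] ++ v) (u ++ v)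
| mv_rel : forall u v r, R r -> elem_move S R (u ++ r ++ v) (u ++ v).

(** Equality in the group <S | R>  (Dehn/Tietze description of F(S)/<<R>>). *)
Definition pres_equiv (S : G -> Prop) (R : list letter -> Prop) :=
  clos_refl_sym_trans (list letter) (elem_move S R).

(** <S | R> is a presentation of the group H ⊆ G (with H's operations
    inherited from G): S ⊆ H, the relators are words over S that hold in G,
    S generates H, and every word over S trivial in G is a consequence of R,
    i.e. the natural map F(S) -> H is onto with kernel the normal closure
    of R. *)
Definition is_presentation (H S : G -> Prop) (R : list letter -> Prop) : Prop :=
  (forall x, S x -> H x) /\
  (forall r, R r -> word_over S r /\ eval r = @gone G) /\
  (forall h, H h -> exists w, word_over S w /\ eval w = h) /\
  (forall w, word_over S w -> eval w = @gone G -> pres_equiv S R w []).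

Definition determining_set (H S : G -> Prop) : Prop :=
  S (@gone G) /\
  exists R : list letter -> Prop,
    (forall r, R r -> length r = 3) /\ is_presentation H S R.

End Defs.

(** Reidemeister–Schreier rewriting.  Pick [rep g] in [S ∩ gH], with
    [rep g = 1] for [g] in [H].  A word over [S], read from a prefix value [c],
    is rewritten letter by letter into the Schreier generators
    [rep c * s * (rep (c s))^-1], which lie in [S^3 ∩ H].  For a relator
    [s1 s2 s3 = 1] the product of the first two generators is
    [rep c * s3^-1 * (rep _)^-1], again in [S^3 ∩ H]; hence rewritten relators,
    and likewise rewritten free cancellations, are consequences of the
    length-3 relations among elements of [T = (S^3 ∩ H)^2].  Conversely every
    letter of [T] lifts to a word of length 6 over [S] whose rewriting is
    equivalent to that letter, so every word over [T] that is trivial in [G]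
    is a consequence of these relations.
    The finite-index hypothesis is not used: [S] itself supplies the coset
    representatives, and presentations may have infinitely many relators. *)

From Stdlib Require Import List Relations Setoid Morphisms ClassicalEpsilon.
Import ListNotations.

Declare Scope group_scope.
Local Open Scope group_scope.
Notation "x * y" := (gmul x y) : group_scope.
Notation "x ^-1" := (ginv x) (at level 3, format "x ^-1") : group_scope.

Section GroupLaws.
Context {G : Group}.
Implicit Types x y : G.
Local Notation e := (gone G).

Lemma mulKg x y : x^-1 * (x * y) = y.
Proof. now rewrite gmulA, gmulV, gmul1. Qed.

Lemma mulgV x : x * x^-1 = e.
Proof.
  rewrite <- (gmul1 (x * x^-1)).
  rewrite <- (gmulV (x^-1)) at 1.
  now rewrite <- gmulA, (mulKg x), gmulV.
Qed.

Lemma mulg1 x : x * e = x.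
Proof. now rewrite <- (gmulV x), gmulA, mulgV, gmul1. Qed.

Lemma mulKVg x y : x * (x^-1 * y) = y.
Proof. now rewrite gmulA, mulgV, gmul1. Qed.

Lemma invg_unique x y : x * y = e -> y = x^-1.
Proof. intro Hxy. now rewrite <- (mulKg x y), Hxy, mulg1. Qed.

Lemma invgK x : (x^-1)^-1 = x.
Proof. symmetry. apply invg_unique, gmulV. Qed.

Lemma invg1 : e^-1 = e.
Proof. symmetry. apply invg_unique, gmul1. Qed.

Lemma invMg x y : (x * y)^-1 = y^-1 * x^-1.
Proof. symmetry. apply invg_unique. now rewrite <- gmulA, mulKVg, mulgV. Qed.

Lemma eval_letter_false x : eval_letter (x, false) = x.
Proof. reflexivity. Qed.

Lemma eval_letter_true x : eval_letter (x, true) = x^-1.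
Proof. reflexivity. Qed.

End GroupLaws.

(* Normal form: products associated to the right, cancellations performed. *)
Global Hint Rewrite <- gmulA : group.
Global Hint Rewrite @eval_letter_false @eval_letter_true gmul1 gmulV
  @mulg1 @mulgV @mulKg @mulKVg @invgK @invg1 @invMg : group.
Ltac group_simpl := simpl; autorewrite with group; try reflexivity.

Section Words.
Context {G : Group}.

Lemma eval_letter_negb (x : G) b : eval_letter (x, negb b) = (eval_letter (x, b))^-1.
Proof. destruct b; group_simpl. Qed.

Lemma eval_app (u v : list (letter G)) : eval (u ++ v) = eval u * eval v.
Proof.
  induction u as [|l u IH]; simpl.
  - now rewrite gmul1.
  - now rewrite IH, gmulA.
Qed.

End Words.

Section Presentations.
Context {G : Group}.
Variable S : G -> Prop.
Variable R : list (letter G) -> Prop.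

Global Instance pres_equiv_equivalence : Equivalence (pres_equiv S R).
Proof.
  split.
  - intro; apply rst_refl.
  - intros u v; apply rst_sym.
  - intros u v w; apply rst_trans.
Qed.

Lemma elem_move_app_l w u v : elem_move S R u v -> elem_move S R (w ++ u) (w ++ v).
Proof.
  destruct 1; rewrite !app_assoc, <- (app_assoc (w ++ u)); now constructor.
Qed.

Lemma elem_move_app_r w u v : elem_move S R u v -> elem_move S R (u ++ w) (v ++ w).
Proof. destruct 1; rewrite <- !app_assoc; now constructor. Qed.

Global Instance app_pres_equiv_proper :
  Proper (pres_equiv S R ==> pres_equiv S R ==> pres_equiv S R) (@app (letter G)).
Proof.
  intros u u' Hu v v' Hv. transitivity (u' ++ v).
  - induction Hu; [apply rst_step, elem_move_app_r; assumption | reflexivity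
                  | now symmetry | etransitivity; eassumption].
  - induction Hv; [apply rst_step, elem_move_app_l; assumption | reflexivity
                  | now symmetry | etransitivity; eassumption].
Qed.

End Presentations.

Section TriangleRelators.
Context {G : Group}.
Variable T : G -> Prop.
Local Notation e := (gone G).

Definition triangle_relators (w : list (letter G)) : Prop :=
  length w = 3 /\ word_over T w /\ eval w = e.

Local Notation "u ~ v" := (pres_equiv T triangle_relators u v) (at level 70).

Lemma triangle_equiv l1 l2 l3 :
  T (fst l1) -> T (fst l2) -> T (fst l3) ->
  eval_letter l1 * eval_letter l2 = eval_letter l3 -> [l1; l2] ~ [l3].
Proof.
  intros T1 T2 T3 E. destruct l3 as [x b].
  transitivity ([l1; l2] ++ [(x, negb b); (x, negb (negb b))] ++ []).
  - symmetry. apply rst_step. rewrite <- (app_nil_r [l1; l2]) at 2. now constructor.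
  - rewrite Bool.negb_involutive. simpl. apply rst_step.
    refine (mv_rel T [] [(x, b)] (r := [l1; l2; (x, negb b)]) _).
    split; [reflexivity | split].
    + intros l [<- | [<- | [<- | []]]]; assumption.
    + simpl. rewrite eval_letter_negb, <- E. group_simpl.
Qed.

Lemma unit_letter_equiv_nil : T e -> [(e, false)] ~ [].
Proof.
  intro Te. transitivity ([(e, false)] ++ [(e, false); (e, negb false)] ++ []).
  - symmetry. apply rst_step. rewrite <- (app_nil_r [(e, false)]) at 2. now constructor.
  - simpl. apply rst_step.
    refine (mv_rel T [] [] (r := [(e, false); (e, false); (e, true)]) _).
    split; [reflexivity | split].
    + intros l [<- | [<- | [<- | []]]]; exact Te.
    + group_simpl.
Qed.

End TriangleRelators.

Section SetPowers.
Context {G : Group}.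
Context {S : G -> Prop} (S_sym : symmetric_set S).

Lemma set_pow3_inv x : set_pow3 S x -> set_pow3 S (x^-1).
Proof.
  intros (a & b & c & Sa & Sb & Sc & ->).
  exists (c^-1), (b^-1), (a^-1). repeat split; try now apply S_sym. group_simpl.
Qed.

Lemma S_eval_letter l : S (fst l) -> S (eval_letter l).
Proof. destruct l as [x []]; simpl; [apply S_sym | trivial]. Qed.

End SetPowers.

Section SchreierRewriting.
Context {G : Group}.
Local Notation e := (gone G).
Variables S H : G -> Prop.
Hypothesis S_sym : symmetric_set S.
Hypothesis S_one : S e.
Hypothesis H_subgroup : is_subgroup H.
Hypothesis H_normal : is_normal H.
Variable R : list (letter G) -> Prop.
Hypothesis R_triangle : forall r, R r -> triangle_relators S r.
Variable rep : G -> G.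
Hypothesis rep_in_S : forall g, S (rep g).
Hypothesis rep_coset : forall g, H (g^-1 * rep g).
Hypothesis rep_in_H : forall g, H g -> rep g = e.

Local Notation T := (set_pow2 (setI (set_pow3 S) H)).
Local Notation "u ~ v" := (pres_equiv T (triangle_relators T) u v) (at level 70).

Lemma H_one : H e.
Proof. apply H_subgroup. Qed.

Lemma H_mul x y : H x -> H y -> H (x * y).
Proof. apply H_subgroup. Qed.

Lemma H_inv x : H x -> H (x^-1).
Proof. apply H_subgroup. Qed.

Lemma T_of_pow3 x : set_pow3 S x -> H x -> T x.
Proof.
  intros S3x Hx. exists x, e. split; [now split | split; [split | group_simpl]].
  - exists e, e, e. repeat split; auto. group_simpl.
  - exact H_one.
Qed.

Lemma T_one : T e.
Proof. apply T_of_pow3; [exists e, e, e; repeat split; auto; group_simpl | exact H_one]. Qed.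

Lemma T_sub_H x : T x -> H x.
Proof. intros (a & b & [_ Ha] & [_ Hb] & ->). now apply H_mul. Qed.

Lemma H_eval_letter l : T (fst l) -> H (eval_letter l).
Proof.
  destruct l as [x []]; intro Tx; simpl; [apply H_inv|]; apply T_sub_H, Tx.
Qed.

Definition schreier (c x : G) : G := rep c * x * (rep (c * x))^-1.

Lemma schreier_in_H c x : H (schreier c x).
Proof.
  assert (E : schreier c x = c * (c^-1 * rep c) * c^-1
                 * ((c * x) * ((c * x)^-1 * rep (c * x))^-1 * (c * x)^-1))
    by (unfold schreier; group_simpl).
  rewrite E. apply H_mul; apply H_normal; [|apply H_inv]; apply rep_coset.
Qed.

Lemma T_schreier c s : S s -> T (schreier c s).
Proof.
  intro Ss. apply T_of_pow3; [|apply schreier_in_H].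
  exists (rep c), s, ((rep (c * s))^-1).
  repeat split; [apply rep_in_S | exact Ss | apply S_sym, rep_in_S].
Qed.

Lemma T_schreier_letter c l : S (fst l) -> T (schreier c (eval_letter l)).
Proof. intro Sl. apply T_schreier, (S_eval_letter S_sym), Sl. Qed.

Lemma schreier_mul c x y : schreier c x * schreier (c * x) y = schreier c (x * y).
Proof. unfold schreier. group_simpl. Qed.

Lemma schreier_one c : schreier c e = e.
Proof. unfold schreier. group_simpl. Qed.

Lemma schreier_from_H c x : H c -> schreier c x = x * (rep (c * x))^-1.
Proof. intro Hc. unfold schreier. rewrite (rep_in_H c Hc). group_simpl. Qed.

Lemma schreier_id_on_H c x : H c -> H x -> schreier c x = x.
Proof.
  intros Hc Hx. rewrite schreier_from_H, (rep_in_H (c * x)) by auto using H_mul.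
  group_simpl.
Qed.

Fixpoint schreier_rewrite (c : G) (w : list (letter G)) : list (letter G) :=
  match w with
  | [] => []
  | l :: w' => (schreier c (eval_letter l), false) :: schreier_rewrite (c * eval_letter l) w'
  end.

Lemma schreier_rewrite_app c u v :
  schreier_rewrite c (u ++ v) = schreier_rewrite c u ++ schreier_rewrite (c * eval u) v.
Proof.
  revert c. induction u as [|l u IH]; intro c; simpl.
  - now rewrite mulg1.
  - now rewrite IH, gmulA.
Qed.

Lemma eval_schreier_rewrite c w : eval (schreier_rewrite c w) = schreier c (eval w).
Proof.
  revert c. induction w as [|l w IH]; intro c; simpl.
  - now rewrite schreier_one.
  - now rewrite IH, eval_letter_false, schreier_mul.
Qed.

Lemma schreier_rewrite_word_over c w : word_over S w -> word_over T (schreier_rewrite c w).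
Proof.
  revert c. induction w as [|l w IH]; intros c Sw l' Hl'; simpl in Hl'.
  - contradiction.
  - destruct Hl' as [<- | Hl'].
    + apply T_schreier_letter, Sw. now left.
    + apply (IH (c * eval_letter l)); auto. intros l'' Hl''. apply Sw. now right.
Qed.

Lemma schreier_rewrite_pair c l1 l2 :
  S (fst l1) -> S (fst l2) -> T (schreier c (eval_letter l1 * eval_letter l2)) ->
  schreier_rewrite c [l1; l2] ~ [(schreier c (eval_letter l1 * eval_letter l2), false)].
Proof.
  intros S1 S2 T12.
  apply triangle_equiv; simpl; auto using T_schreier_letter.
  rewrite !eval_letter_false. apply schreier_mul.
Qed.

Lemma schreier_rewrite_triple c l1 l2 l3 :
  S (fst l1) -> S (fst l2) -> S (fst l3) ->
  T (schreier c (eval_letter l1 * eval_letter l2)) ->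
  T (schreier c (eval_letter l1 * eval_letter l2 * eval_letter l3)) ->
  schreier_rewrite c [l1; l2; l3]
    ~ [(schreier c (eval_letter l1 * eval_letter l2 * eval_letter l3), false)].
Proof.
  intros S1 S2 S3 T12 T123.
  change (schreier_rewrite c [l1; l2; l3]) with
    (schreier_rewrite c [l1; l2]
       ++ [(schreier (c * eval_letter l1 * eval_letter l2) (eval_letter l3), false)]).
  rewrite schreier_rewrite_pair by assumption.
  apply triangle_equiv; simpl; auto using T_schreier_letter.
  rewrite !eval_letter_false, <- (gmulA c). apply schreier_mul.
Qed.

Lemma schreier_rewrite_free_pair c x b :
  S x -> schreier_rewrite c [(x, b); (x, negb b)] ~ [].
Proof.
  intro Sx.
  assert (E : eval_letter (x, b) * eval_letter (x, negb b) = e)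
    by (rewrite eval_letter_negb; apply mulgV).
  rewrite schreier_rewrite_pair, E, schreier_one by (rewrite ?E, ?schreier_one; auto using T_one).
  apply unit_letter_equiv_nil, T_one.
Qed.

Lemma schreier_rewrite_relator c l1 l2 l3 :
  S (fst l1) -> S (fst l2) -> S (fst l3) -> eval [l1; l2; l3] = e ->
  schreier_rewrite c [l1; l2; l3] ~ [].
Proof.
  intros S1 S2 S3 E. simpl in E. rewrite mulg1, gmulA in E.
  assert (E12 : eval_letter l1 * eval_letter l2 = (eval_letter l3)^-1).
  { rewrite <- (mulg1 (_ * _)), <- (mulgV (eval_letter l3)), gmulA, E. apply gmul1. }
  rewrite schreier_rewrite_triple, E, schreier_one; auto.
  - apply unit_letter_equiv_nil, T_one.
  - rewrite E12. apply T_schreier, S_sym, (S_eval_letter S_sym), S3.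
  - rewrite E, schreier_one. apply T_one.
Qed.

Lemma schreier_rewrite_elem_move c u v :
  elem_move S R u v -> schreier_rewrite c u ~ schreier_rewrite c v.
Proof.
  destruct 1 as [u v x b Sx | u v r Rr]; rewrite !schreier_rewrite_app.
  - assert (E : eval [(x, b); (x, negb b)] = e).
    { simpl. rewrite mulg1, eval_letter_negb. apply mulgV. }
    rewrite E, mulg1, schreier_rewrite_free_pair by exact Sx. reflexivity.
  - destruct (R_triangle r Rr) as (Len & Sr & Er).
    rewrite Er, mulg1.
    destruct r as [|l1 [|l2 [|l3 [|]]]]; try discriminate.
    rewrite schreier_rewrite_relator by first [exact Er | apply Sr; simpl; tauto].
    reflexivity.
Qed.

Lemma schreier_rewrite_pres_equiv c u v :
  pres_equiv S R u v -> schreier_rewrite c u ~ schreier_rewrite c v.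
Proof.
  induction 1.
  - now apply schreier_rewrite_elem_move.
  - reflexivity.
  - now symmetry.
  - etransitivity; eassumption.
Qed.

Definition lifts (w' w : list (letter G)) : Prop :=
  word_over S w' /\ eval w' = eval w /\ forall c, H c -> schreier_rewrite c w' ~ w.

Lemma lifts_app u' u v' v :
  H (eval u) -> lifts u' u -> lifts v' v -> lifts (u' ++ v') (u ++ v).
Proof.
  intros Hu (Su & Eu & Ru) (Sv & Ev & Rv). split; [|split].
  - intros l Hl. apply in_app_iff in Hl. destruct Hl; auto.
  - now rewrite !eval_app, Eu, Ev.
  - intros c Hc. rewrite schreier_rewrite_app, Ru, Rv by (rewrite ?Eu; auto using H_mul).
    reflexivity.
Qed.

Lemma lift_pow3 x : set_pow3 S x -> H x -> exists w', lifts w' [(x, false)].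
Proof.
  intros (s1 & s2 & s3 & S1 & S2 & S3 & ->) Hx.
  exists [(s1, false); (s2, false); (s3, false)]. split; [|split].
  - intros l [<- | [<- | [<- | []]]]; assumption.
  - group_simpl.
  - intros c Hc.
    rewrite schreier_rewrite_triple; rewrite ?eval_letter_false; auto.
    + rewrite schreier_id_on_H by assumption. reflexivity.
    + apply T_of_pow3; [|apply schreier_in_H].
      rewrite schreier_from_H by assumption.
      exists s1, s2, ((rep (c * (s1 * s2)))^-1).
      repeat split; [assumption | assumption | apply S_sym, rep_in_S].
    + rewrite schreier_id_on_H by assumption.
      apply T_of_pow3; [exists s1, s2, s3; repeat split |]; assumption.
Qed.

Lemma T_letter_split l :
  T (fst l) -> exists x y, setI (set_pow3 S) H x /\ setI (set_pow3 S) H y /\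
                           eval_letter l = x * y.
Proof.
  destruct l as [t []]; simpl; intros (a & b & [S3a Ha] & [S3b Hb] & ->).
  - exists (b^-1), (a^-1).
    repeat split; try apply (set_pow3_inv S_sym); auto using H_inv. group_simpl.
  - exists a, b. repeat split; assumption.
Qed.

Lemma lift_letter l : T (fst l) -> exists w', lifts w' [l].
Proof.
  intro Tl. destruct (T_letter_split l Tl) as (x & y & [S3x Hx] & [S3y Hy] & Exy).
  destruct (lift_pow3 x S3x Hx) as [wx Lx], (lift_pow3 y S3y Hy) as [wy Ly].
  assert (Lxy : lifts (wx ++ wy) [(x, false); (y, false)])
    by (apply (lifts_app wx [(x, false)]); [group_simpl; exact Hx | assumption..]).
  exists (wx ++ wy). destruct Lxy as (Sw & Ew & Rw).
  split; [exact Sw | split].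
  - rewrite Ew. group_simpl. now rewrite Exy.
  - intros c Hc. rewrite Rw by exact Hc.
    apply triangle_equiv; simpl; auto using T_of_pow3.
Qed.

Lemma lift_word w : word_over T w -> exists w', lifts w' w.
Proof.
  induction w as [|l w IH]; intro Tw.
  - exists []. split; [intros l [] | split; [reflexivity | intros; reflexivity]].
  - destruct (lift_letter l) as [wl Ll]; [apply Tw; now left|].
    destruct IH as [ww Lw]; [intros l' Hl'; apply Tw; now right|].
    exists (wl ++ ww). apply (lifts_app wl [l] ww w); [|assumption..].
    simpl. rewrite mulg1. apply H_eval_letter, Tw. now left.
Qed.

Theorem determining_set_schreier :
  (forall g, exists w, word_over S w /\ eval w = g) ->
  (forall w, word_over S w -> eval w = e -> pres_equiv S R w []) ->
  determining_set H T.
Proof.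
  intros S_gen S_complete. split; [exact T_one|].
  exists (triangle_relators T). split; [intros r (Len & _); exact Len|].
  split; [exact T_sub_H | split; [intros r (_ & Tr & Er); now split | split]].
  - intros h Hh. destruct (S_gen h) as (w & Sw & Ew).
    exists (schreier_rewrite e w). split; [now apply schreier_rewrite_word_over|].
    rewrite eval_schreier_rewrite, Ew. apply schreier_id_on_H; [exact H_one | exact Hh].
  - intros w Tw Ew. destruct (lift_word w Tw) as (w' & Sw' & Ew' & Rw').
    rewrite <- (Rw' e H_one). rewrite Ew in Ew'.
    apply (schreier_rewrite_pres_equiv e w' []), S_complete; assumption.
Qed.
End SchreierRewriting.

Lemma exists_coset_representatives {G : Group} (S H : G -> Prop) :
  S (gone G) -> is_subgroup H -> meets_every_coset S H ->
  exists rep : G -> G, (forall g, S (rep g)) /\ (forall g, H (g^-1 * rep g)) /\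
                       (forall g, H g -> rep g = gone G).
Proof.
  intros S_one H_subgroup S_meets.
  destruct (choice (fun g y => S y /\ H (g^-1 * y) /\ (H g -> y = gone G))) as [rep Hrep].
  - intro g. destruct (classic (H g)) as [Hg | Hg].
    + exists (gone G). rewrite mulg1. split; [exact S_one | split; [now apply H_subgroup | auto]].
    + destruct (S_meets g) as (s & Ss & Hs). exists s. tauto.
  - exists rep. split; [|split]; intro g; apply Hrep.
Qed.

Theorem mainTheorem16 (G : Group) (S H : G -> Prop) :
  symmetric_set S ->
  determining_set (fun _ : G => True) S ->
  is_subgroup H -> is_normal H -> finite_index H ->
  meets_every_coset S H ->
  determining_set H (set_pow2 (setI (set_pow3 S) H)).
Proof.
  intros S_sym (S_one & R & R_length & _ & R_valid & S_gen & S_complete)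
    H_subgroup H_normal _ S_meets.
  destruct (exists_coset_representatives S H S_one H_subgroup S_meets)
    as (rep & rep_in_S & rep_coset & rep_in_H).
  apply (determining_set_schreier S H S_sym S_one H_subgroup H_normal R)
    with (rep := rep); auto.
  intros r Rr. split; [now apply R_length | now apply R_valid].
Qed.
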